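(* Let $(G,\mu,[R])$ be a random-predicate $k$-player game, let $i,p\in[k]$, and let $\varepsilon\in(0,1)$ with $\mathbf{val}(G)=1-\varepsilon$. Then $\mathbf{val}(\mathcal{T}^i_p(G))=1-\varepsilon'$ for some $\varepsilon'>0$ that depends only on $\varepsilon$ and the size of $G$.
   Context: A random-predicate $k$-player game $(G,\mu,[R])$ has finite question sets $\mathcal{X}_j$, finite answer sets $\mathcal{A}_j$, a distribution $\mu$ on $\mathcal{X}_1\times\cdots\times\mathcal{X}_k$ (all probabilities assumed to be multiples of $1/M$ for some integer $M$), and predicates $V_r$, $r\in[R]$; the verifier samples $q\sim\mu$ and $r\in[R]$ uniformly and independently, player $j$ answers $\alpha^j(q|_j)$ ($q|_j$ the $j$-th coordinate), and the verifier accepts iff $V_r(q,\text{answers})=1$; the value is the maximum acceptance probability over strategies. The size of $G$ is $k\cdot M\cdot\prod_j|\mathcal{X}_j||\mathcal{A}_j|$. The $i$-link distribution $L_i(G)$: sample $v\sim\mu|_i$ (marginal on coordinate $i$), then $q,q'$ independently from $\mu$ conditioned on $q|_i=q'|_i=v$. For $q=(x^1,\dots,x^k)$, $q'=(y^1,\dots,y^k)$ let $\Pi^p((q,q'))=(y^1,\dots,y^{p-1},x^p,y^{p+1},\dots,y^k)$. The game $\mathcal{T}^i_p(G)$ (same question and answer sets): the verifier samples $(q,q')\sim L_i(G)$ and $r\in[R]$ uniformly and independently, sends the coordinates of $\tilde q=\Pi^p((q,q'))$ to the players, and on answers $a$ accepts by default if $q\neq q'$, and if $q=q'$ (so $\tilde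 q=q$) accepts iff $V_r(q,a)=1$. Its value is the maximum acceptance probability over strategies $\alpha^j:\mathcal{X}_j\to\mathcal{A}_j$. *)

(* Probabilities are rationals (all game probabilities are
   multiples of 1/M, and R >= 1 is an integer, so values are rational). *)
From HB Require Import structures.
From mathcomp Require Import all_boot all_order all_algebra.
Unset Printing Implicit Defensive.
Import Order.TTheory GRing.Theory Num.Theory.
Local Open Scope ring_scope.

Definition tup {k : nat} (n : 'I_k -> nat) : finType :=
  {dffun forall j : 'I_k, 'I_(n j)}.

(* A random-predicate k-player game (G, mu, [R]):
   question set X_j = 'I_(gnX j), answer set A_j = 'I_(gnA j),
   mu q = gmu q / gM, predicates V_r for r : 'I_gR. *)
Record game := Game {
  gk : nat;
  gnX : 'I_gk -> nat;
  gnA : 'I_gk -> nat;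
  gM : nat;
  gmu : tup gnX -> nat;
  gR : nat;
  gV : 'I_gR -> tup gnX -> tup gnA -> bool }.

Definition wf_game (G : game) : Prop :=
  (0 < gM G)%N /\ (\sum_(q : tup (gnX G)) gmu G q)%N = gM G /\ (0 < gR G)%N.

Definition gsize (G : game) : nat :=
  (gk G * gM G * \prod_(j < gk G) (gnX G j * gnA G j))%N.

Definition prob (G : game) (q : tup (gnX G)) : rat := (gmu G q)%:R / (gM G)%:R.

Definition strategy (G : game) : finType :=
  {dffun forall j : 'I_(gk G), {ffun 'I_(gnX G j) -> 'I_(gnA G j)}}.

Definition answers (G : game) (s : strategy G) (q : tup (gnX G)) : tup (gnA G) :=
  @finfun _ (fun j => 'I_(gnA G j)) (fun j => s j (q j)).

Definition acc (G : game) (s : strategy G) : rat :=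
  \sum_(q : tup (gnX G)) \sum_(r < gR G)
     prob G q * (gR G)%:R^-1 * (gV G r q (answers G s q))%:R.

Definition gval (G : game) : rat := \big[Num.max/0]_(s : strategy G) acc G s.

Definition marg (G : game) (i : 'I_(gk G)) (v : 'I_(gnX G i)) : rat :=
  \sum_(q : tup (gnX G) | q i == v) prob G q.

Definition cond (G : game) (i : 'I_(gk G)) (v : 'I_(gnX G i)) (q : tup (gnX G))
  : rat := if q i == v then prob G q / marg G i v else 0.

Definition link (G : game) (i : 'I_(gk G)) (q q' : tup (gnX G)) : rat :=
  \sum_(v : 'I_(gnX G i)) marg G i v * cond G i v q * cond G i v q'.

Definition Pi (G : game) (p : 'I_(gk G)) (q q' : tup (gnX G)) : tup (gnX G) :=
  @finfun _ (fun j => 'I_(gnX G j)) (fun j => if j == p then q j else q' j).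

Definition accT (G : game) (i p : 'I_(gk G)) (s : strategy G) : rat :=
  \sum_(q : tup (gnX G)) \sum_(q' : tup (gnX G)) \sum_(r < gR G)
     link G i q q' * (gR G)%:R^-1 *
     (if q != q' then 1 else (gV G r q (answers G s (Pi G p q q')))%:R).

Definition valT (G : game) (i p : 'I_(gk G)) : rat :=
  \big[Num.max/0]_(s : strategy G) accT G i p s.

From HB Require Import structures.
From mathcomp Require Import all_boot all_order all_algebra.
From mathcomp Require Import zify ring.
Import Order.TTheory GRing.Theory Num.Theory.
Local Open Scope ring_scope.

(* In T^i_p(G) the verifier can only reject when q = q', and then it plays G
   on q.  The link distribution puts mass at least
   marg(q_i) * (mu(q) / marg(q_i))^2 >= mu(q)^2 >= mu(q) / M on the pair (q, q),
   because every nonzero probability is at least 1/M.  Hence any strategy is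
   rejected by T^i_p(G) with probability at least 1/M times its rejection
   probability in G, i.e. at least eps / M >= eps / size(G). *)

Lemma sqr_le_mul_sqr_div (R : realFieldType) (a m : R) :
  0 <= a <= m -> m <= 1 -> a ^+ 2 <= m * (a / m) ^+ 2.
Proof.
move=> /andP[a_ge0 a_le_m] m_le1.
have [m0|m_neq0] := eqVneq m 0.
  have -> : a = 0 by apply/eqP; rewrite eq_le a_ge0 -m0 a_le_m.
  by rewrite mul0r expr0n mulr0.
have m_gt0 : 0 < m by rewrite lt0r m_neq0 (le_trans a_ge0).
have -> : m * (a / m) ^+ 2 = a ^+ 2 / m by field.
by rewrite ler_pdivlMr // ler_piMr ?sqr_ge0.
Qed.

Lemma natr_div_div_le_sqr (R : numFieldType) (n M : nat) :
  n%:R / M%:R / M%:R <= (n%:R / M%:R) ^+ 2 :> R.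
Proof.
rewrite expr_div_n -mulrA -invfM -expr2 ler_wpM2r ?invr_ge0 ?exprn_ge0 //.
by rewrite -natrX ler_nat; nia.
Qed.

Section LinkTest.
Variable G : game.
Hypothesis G_wf : wf_game G.
Local Notation Q := (tup (gnX G)).

Lemma gM_gt0 : 0 < (gM G)%:R :> rat.
Proof. by case: G_wf; rewrite ltr0n. Qed.

Lemma gR_gt0 : 0 < (gR G)%:R :> rat.
Proof. by case: G_wf => _ [_]; rewrite ltr0n. Qed.

Lemma prob_ge0 q : 0 <= prob G q.
Proof. by rewrite divr_ge0 ?ler0n. Qed.

Lemma sum_prob : \sum_(q : Q) prob G q = 1.
Proof.
by rewrite -mulr_suml -natr_sum; case: G_wf => _ [-> _]; rewrite divff ?gt_eqF ?gM_gt0.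
Qed.

Definition pass_prob (s : strategy G) (q : Q) : rat :=
  \sum_(r < gR G) (gR G)%:R^-1 * (gV G r q (answers G s q))%:R.

Lemma sum_gR_inv : \sum_(r < gR G) (gR G)%:R^-1 = 1 :> rat.
Proof. by rewrite sumr_const card_ord -[LHS]mulr_natl mulfV ?gt_eqF ?gR_gt0. Qed.

Lemma pass_prob_le1 s q : pass_prob s q <= 1.
Proof.
rewrite -sum_gR_inv; apply: ler_sum => r _.
by rewrite ler_piMr ?invr_ge0 ?ler0n // lern1 leq_b1.
Qed.

Lemma reject_probE s : 1 - acc G s = \sum_(q : Q) prob G q * (1 - pass_prob s q).
Proof.
rewrite -[in LHS]sum_prob -sumrB; apply: eq_bigr => q _.
rewrite mulrBr mulr1 mulr_sumr; congr (_ - _).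
by apply: eq_bigr => r _; rewrite mulrA.
Qed.

Lemma gval_ge0 : 0 <= gval G.
Proof. exact: bigmax_ge_id. Qed.

Lemma acc_le_gval s : acc G s <= gval G.
Proof. exact: le_bigmax. Qed.

Variable i : 'I_(gk G).

Lemma marg_ge0 v : 0 <= marg G i v.
Proof. by apply: sumr_ge0 => q _; apply: prob_ge0. Qed.

Lemma prob_le_marg q : prob G q <= marg G i (q i).
Proof. by rewrite /marg (bigD1 q) //= lerDl sumr_ge0 // => q' _; apply: prob_ge0. Qed.

Lemma marg_le1 v : marg G i v <= 1.
Proof.
rewrite -sum_prob [leRHS](bigID (fun q : Q => q i == v)) /= lerDl.
by apply: sumr_ge0 => q _; apply: prob_ge0.
Qed.

Lemma sum_marg : \sum_(v : 'I_(gnX G i)) marg G i v = 1.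
Proof.
rewrite -sum_prob (exchange_big_dep xpredT) //=; apply: eq_bigr => q _.
by rewrite (big_pred1 (q i)) // => v; rewrite eq_sym.
Qed.

Lemma cond_ge0 v q : 0 <= cond G i v q.
Proof. by rewrite /cond; case: ifP => // _; rewrite divr_ge0 ?prob_ge0 ?marg_ge0. Qed.

Lemma sum_cond v : marg G i v != 0 -> \sum_(q : Q) cond G i v q = 1.
Proof. by move=> m_neq0; rewrite -big_mkcond -mulr_suml divff. Qed.

Lemma sum_link : \sum_(q : Q) \sum_(q' : Q) link G i q q' = 1.
Proof.
rewrite -sum_marg; under eq_bigr do rewrite exchange_big /=.
rewrite exchange_big /=; apply: eq_bigr => v _.
have [->|m_neq0] := eqVneq (marg G i v) 0.
  by rewrite big1 // => q _; rewrite big1 // => q' _; rewrite !mul0r.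
under eq_bigr do rewrite -mulr_sumr sum_cond // mulr1.
by rewrite -mulr_sumr sum_cond // mulr1.
Qed.

Lemma link_diag_ge q : prob G q / (gM G)%:R <= link G i q q.
Proof.
apply: (le_trans (natr_div_div_le_sqr _ (gmu G q) (gM G))).
have diag_term : prob G q ^+ 2 <= marg G i (q i) * cond G i (q i) q * cond G i (q i) q.
  rewrite /cond eqxx -mulrA -expr2.
  by rewrite sqr_le_mul_sqr_div ?prob_ge0 ?prob_le_marg ?marg_le1.
rewrite (le_trans diag_term) // /link (bigD1 (q i)) //= lerDl.
by apply: sumr_ge0 => v _; rewrite !mulr_ge0 ?marg_ge0 ?cond_ge0.
Qed.

Lemma Pi_diag p q : Pi G p q q = q.
Proof. by apply/ffunP => j; rewrite ffunE; case: ifP. Qed.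

Lemma accTE p s :
  accT G i p s = 1 - \sum_(q : Q) link G i q q * (1 - pass_prob s q).
Proof.
rewrite -[X in _ = X - _]sum_link -sumrB; apply: eq_bigr => q _.
rewrite (bigD1 q) //= [in RHS](bigD1 q) //= eqxx Pi_diag /=.
have -> : \sum_(q' | q' != q) \sum_(r < gR G) link G i q q' * (gR G)%:R^-1 *
     (if q != q' then 1 else (gV G r q (answers G s (Pi G p q q')))%:R)
   = \sum_(q' | q' != q) link G i q q'.
  apply: eq_bigr => q' q'_neq_q; rewrite eq_sym q'_neq_q.
  by under eq_bigr do rewrite mulr1; rewrite -mulr_sumr sum_gR_inv mulr1.
have -> : \sum_(r < gR G) link G i q q / (gR G)%:R * (gV G r q (answers G s q))%:R
   = link G i q q * pass_prob s q.
  by rewrite mulr_sumr; apply: eq_bigr => r _; rewrite mulrA.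
ring.
Qed.

Lemma accT_le_reject p s : accT G i p s <= 1 - (1 - acc G s) / (gM G)%:R.
Proof.
rewrite accTE lerD2l lerN2 reject_probE mulr_suml.
apply: ler_sum => q _; rewrite mulrAC ler_wpM2r ?link_diag_ge //.
by rewrite subr_ge0 pass_prob_le1.
Qed.

Lemma valT_le p : valT G i p <= 1 - (1 - gval G) / (gM G)%:R.
Proof.
have M_ge1 : 1 <= (gM G)%:R :> rat by rewrite ler1n -(ltr0n rat) gM_gt0.
apply: bigmax_le => [|s _].
  rewrite subr_ge0 ler_pdivrMr ?gM_gt0 // mul1r.
  by rewrite (le_trans _ M_ge1) // lerBlDr lerDl gval_ge0.
apply: (le_trans (accT_le_reject p s)).
by rewrite lerD2l lerN2 ler_wpM2r ?invr_ge0 ?ler0n // lerD2l lerN2 acc_le_gval.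
Qed.

End LinkTest.

Lemma gM_le_gsize (G : game) (i : 'I_(gk G)) :
  wf_game G -> 0 < gval G -> (gM G <= gsize G)%N.
Proof.
move=> [M_gt0 [sum_mu _]] gval_gt0.
have [q _|no_q] := pickP (@predT (tup (gnX G))); last first.
  by move: M_gt0; rewrite -sum_mu big_pred0.
have [s _|no_s] := pickP (@predT (strategy G)); last first.
  by move: gval_gt0; rewrite /gval big_pred0 ?ltxx.
have k_gt0 : (0 < gk G)%N by apply: leq_ltn_trans (ltn_ord i).
have prod_gt0 : (0 < \prod_(j < gk G) (gnX G j * gnA G j))%N.
  apply: prodn_gt0 => j; rewrite muln_gt0.
  by rewrite (leq_ltn_trans _ (ltn_ord (q j))) // (leq_ltn_trans _ (ltn_ord (s j (q j)))).
by rewrite /gsize -mulnA mulnC -mulnA leq_pmulr // muln_gt0 prod_gt0.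
Qed.

Theorem claim3p4 :
  exists delta : rat -> nat -> rat,
    (forall (eps : rat) (n : nat), 0 < eps < 1 -> 0 < delta eps n) /\
    forall (G : game) (i p : 'I_(gk G)) (eps : rat),
      wf_game G -> 0 < eps < 1 -> gval G = 1 - eps ->
      exists eps' : rat, valT G i p = 1 - eps' /\ delta eps (gsize G) <= eps'.
Proof.
exists (fun eps n => eps / (maxn n 1)%:R); split.
  by move=> eps n /andP[eps_gt0 _]; rewrite divr_gt0 // ltr0n leq_max orbT.
move=> G i p eps G_wf /andP[eps_gt0 eps_lt1] gval_eq.
exists (1 - valT G i p); split; first by rewrite subKr.
have M_le_size : (gM G <= maxn (gsize G) 1)%N.
  by rewrite leq_max gM_le_gsize // gval_eq subr_gt0.
have M_gt0 := @gM_gt0 G G_wf.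
have := @valT_le G G_wf i p; rewrite gval_eq subKr => valT_bound.
rewrite lerBrDl -lerBrDr (le_trans valT_bound) // lerD2l lerN2.
by rewrite ler_pM2l // lef_pV2 ?ler_nat // posrE ltr0n leq_max orbT.
Qed.
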